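(* Let $\phi$ be a character (unital algebra homomorphism to $\mathbb K$) of the block-substitution bialgebra $\mathbf{B}$ of noncrossing partitions. Then $\phi$ is invertible in the monoid of characters of $\mathbf{B}$ under convolution if and only if $\phi(I_n)\neq0$ for all $n\geq1$, where $I_n=\{[n]\}$.
   Context: $\mathbb K$ is a field of characteristic zero. Noncrossing partitions of $[n]$: no $a<c<b<d$ with $a,b$ in one block and $c,d$ in another; partitions of finite linearly ordered sets are identified with partitions of $[m]$ via the order-preserving bijection; $P_{|X}$ is the induced partition on $X$. $\mathbf{B}$ is the free commutative unital algebra generated by nonempty noncrossing partitions. For noncrossing $P\leq Q$ of $[n]$ (each block of $Q$ a union of blocks of $P$), $Q=\{\tau_1,\dots,\tau_l\}$, put $P/Q=P_{|\tau_1}\cdots P_{|\tau_l}$. The coproduct is $\delta(P)=\sum_{Q\geq P\text{ noncrossing}}Q\otimes P/Q$, extended multiplicatively; counit $\varepsilon(P)=1$ if $P$ has one block and $0$ otherwise. The convolution of characters is $\phi*\psi=m_{\mathbb K}\circ(\phi\otimes\psi)\circ\delta$, with unit $\varepsilon$. *)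

From HB Require Import structures.
From mathcomp Require Import all_boot all_order all_algebra.
Set Implicit Arguments. Unset Strict Implicit. Unset Printing Implicit Defensive.
Import GRing.Theory.
Local Open Scope ring_scope.

(* A set partition of [n] = {0,...,n-1} is encoded as P : {set {set 'I_n}}
   satisfying [partition P [set: 'I_n]] (blocks nonempty, disjoint, covering). *)

Definition noncrossing n (P : {set {set 'I_n}}) : bool :=
  [forall A in P, forall B in P, (A != B) ==>
     [forall a in A, forall b in A, forall c in B, forall d in B,
        ~~ [&& (a < c)%N, (c < b)%N & (b < d)%N]]].

Definition NCpart n (P : {set {set 'I_n}}) : bool :=
  partition P [set: 'I_n] && noncrossing P.

Definition refines n (P Q : {set {set 'I_n}}) : bool :=
  [forall B in P, exists C in Q, B \subset C].

(* Induced partition P_{|tau}, transported to [#|tau|] via the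
   order-preserving bijection 'I_#|tau| -> tau, k |-> k-th element of the
   increasingly enumerated set tau (enum_val). *)
Definition restrict n (P : {set {set 'I_n}}) (tau : {set 'I_n})
  : {set {set 'I_#|tau|}} :=
  [set [set k : 'I_#|tau| | @enum_val _ (mem tau) k \in B] | B : {set 'I_n} in P & B \subset tau].

(* A character of the free commutative algebra B is determined by its
   (arbitrary) values on the free generators, the nonempty noncrossing
   partitions; we represent it by such a value function (values on
   non-noncrossing sets or on n = 0 are irrelevant). *)
Definition charB (K : fieldType) := forall n : nat, {set {set 'I_n}} -> K.

(* Convolution: (phi * psi)(P) = sum_{Q >= P noncrossing} phi(Q) psi(P/Q),
   with psi(P/Q) = prod_{tau in Q} psi(P_{|tau}) by multiplicativity. *)
Definition convB (K : fieldType) (phi psi : charB K) : charB K :=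
  fun n P => \sum_(Q : {set {set 'I_n}} | NCpart Q && refines P Q)
               phi n Q * \prod_(tau in Q) psi #|tau| (restrict P tau).

Definition epsB (K : fieldType) : charB K :=
  fun n P => if #|P| == 1%N then 1 else 0.

(* Equality of characters = equality on all generators. *)
Definition eqB (K : fieldType) (phi psi : charB K) : Prop :=
  forall n (P : {set {set 'I_n}}), (0 < n)%N -> NCpart P -> phi n P = psi n P.

Definition invertibleB (K : fieldType) (phi : charB K) : Prop :=
  exists psi : charB K, eqB (convB phi psi) (@epsB K) /\ eqB (convB psi phi) (@epsB K).

From mathcomp Require Import all_boot all_order all_algebra.
Set Implicit Arguments. Unset Strict Implicit. Unset Printing Implicit Defensive.
Import GRing.Theory.

(* The coefficient of psi(P) in (phi * psi)(P) is phi(I_n); every other term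
   evaluates psi on restrictions of P to the blocks of a coarsening Q <> I_n,
   i.e. on partitions of fewer points.  Hence (phi * psi)(I_n) = phi(I_n) psi(I_n)
   gives necessity, while if all phi(I_n) are nonzero the equation
   phi * psi = eps can be solved for psi by recursion on n, and the same
   triangularity makes phi left-cancellable.  Since the coproduct is
   coassociative (a noncrossing coarsening of P_{|rho} on every block rho of R
   is the same as one noncrossing Q between P and R), the characters form a
   monoid, in which a right inverse of a left-cancellable element is two-sided. *)

(** * Increasing maps between ordinals *)

Lemma sorted_enum_ord n (A : {pred 'I_n}) : sorted (fun i j : 'I_n => (i < j)%N) (enum A).
Proof.
rewrite {1}/enum_mem -enumT; apply: sorted_filter => [j i k|]; first exact: ltn_trans.
by have := iota_ltn_sorted 0 n; rewrite -val_enum_ord sorted_map.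
Qed.

Lemma enum_val_incr n (A : {pred 'I_n}) : {mono @enum_val _ A : i j / (i < j)%N}.
Proof.
have homo : {homo @enum_val _ A : i j / (i < j)%N}.
  move=> i j ij; have x0 : 'I_n := enum_val i; rewrite !(enum_val_nth x0).
  apply: (sorted_ltn_nth (fun j i k : 'I_n => @ltn_trans j i k)) => //.
  - exact: sorted_enum_ord.
  - by rewrite inE -cardE.
  - by rewrite inE -cardE.
move=> i j; case: (ltngtP i j) => [/homo -> // | ji | /val_inj -> ]; last by rewrite !ltnn.
by rewrite !leq_gtF // ltnW // homo.
Qed.

Lemma enum_val_image n (A : {set 'I_n}) : @enum_val _ (mem A) @: setT = A.
Proof.
apply/setP => x; apply/imsetP/idP => [[k _ ->]|Ax]; first exact: enum_valP.
by exists (enum_rank_in Ax x); rewrite ?inE // enum_rankK_in.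
Qed.

Lemma incr_inj m n (g : 'I_m -> 'I_n) : {mono g : i j / (i < j)%N} -> injective g.
Proof.
move=> g_incr i j eq_g; apply: val_inj.
by case: (ltngtP i j) => // ij; move: ij; rewrite -g_incr eq_g ltnn.
Qed.

Lemma sorted_map_incr m n (g : 'I_m -> 'I_n) : {mono g : i j / (i < j)%N} ->
  sorted (fun x y : 'I_n => (x < y)%N) (map g (enum 'I_m)).
Proof.
move=> g_incr; rewrite sorted_map; apply: sub_sorted (sorted_enum_ord _) => i j.
by rewrite /= g_incr.
Qed.

Lemma incr_map_enum_eq m1 m2 n (g1 : 'I_m1 -> 'I_n) (g2 : 'I_m2 -> 'I_n) :
  {mono g1 : i j / (i < j)%N} -> {mono g2 : i j / (i < j)%N} ->
  g1 @: setT = g2 @: setT -> map g1 (enum 'I_m1) = map g2 (enum 'I_m2).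
Proof.
move=> g1_incr g2_incr eq_img.
apply: (irr_sorted_eq (fun j i k : 'I_n => @ltn_trans j i k)); rewrite ?sorted_map_incr //.
  by move=> x; rewrite /= ltnn.
move=> x; apply/mapP/mapP => -[k _ ->].
  have /imsetP[k' _ ->] : g1 k \in g2 @: setT by rewrite -eq_img imset_f.
  by exists k'; rewrite ?mem_enum.
have /imsetP[k' _ ->] : g2 k \in g1 @: setT by rewrite eq_img imset_f.
by exists k'; rewrite ?mem_enum.
Qed.

Lemma trivIset_block_eq (T : finType) (P : {set {set T}}) A B x :
  trivIset P -> A \in P -> B \in P -> x \in A -> x \in B -> A = B.
Proof. by move=> tiP AP BP xA xB; rewrite -(def_pblock tiP AP xA) (def_pblock tiP BP xB). Qed.

Lemma partition_ssetI (T : finType) (P : {set {set T}}) D : partition P D -> P ::&: D = P.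
Proof. by move=> pP; apply/setP => B; rewrite inE andb_idr // => /(partitionS pP). Qed.

Lemma ssetI_block (T : finType) (P : {set {set T}}) D tau :
  partition P D -> tau \in P -> P ::&: tau = [set tau].
Proof.
move=> pP tauP; apply/setP => B; rewrite !inE.
apply/andP/eqP => [[BP Btau]|->]; last by rewrite tauP.
have /set0Pn[x xB] := partition_neq0 pP BP.
exact: trivIset_block_eq (partition_trivIset pP) BP tauP xB (subsetP Btau x xB).
Qed.

Lemma partition_subset_eq (T : finType) (P Q : {set {set T}}) D :
  partition P D -> partition Q D -> Q \subset P -> Q = P.
Proof.
move=> pP pQ QP; apply/eqP; rewrite eqEsubset QP; apply/subsetP => B BP.
have /set0Pn[x xB] := partition_neq0 pP BP.
have /bigcupP[C CQ xC] : x \in cover Q.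
  by rewrite (cover_partition pQ) -(cover_partition pP); apply/bigcupP; exists B.
by rewrite (trivIset_block_eq (partition_trivIset pP) BP (subsetP QP C CQ) xB xC).
Qed.

Lemma ncP n (P : {set {set 'I_n}}) :
  reflect {in P &, forall A B : {set 'I_n}, A != B ->
             forall a b c d : 'I_n, a \in A -> b \in A -> c \in B -> d \in B ->
             ~~ [&& (a < c)%N, (c < b)%N & (b < d)%N]}
          (noncrossing P).
Proof.
apply: (iffP forall_inP) => [nc A B AP BP AB a b c d aA bA cB dB | nc A AP].
  by move: (nc A AP) => /forall_inP/(_ B BP)/implyP/(_ AB)/forall_inP/(_ a aA)
    /forall_inP/(_ b bA)/forall_inP/(_ c cB)/forall_inP/(_ d dB).
apply/forall_inP => B BP; apply/implyP => AB.
by do 4 apply/forall_inP => ? ?; exact: (nc A B).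
Qed.

Lemma noncrossingS n (P Q : {set {set 'I_n}}) : P \subset Q -> noncrossing Q -> noncrossing P.
Proof. by move=> /subsetP PQ /ncP ncQ; apply/ncP => A B AP BP; apply: ncQ; apply: PQ. Qed.

Lemma refines_refl n (P : {set {set 'I_n}}) : refines P P.
Proof. by apply/forall_inP => B BP; apply/exists_inP; exists B. Qed.

Lemma refines_trans n (P Q R : {set {set 'I_n}}) : refines P Q -> refines Q R -> refines P R.
Proof.
move=> /forall_inP rPQ /forall_inP rQR; apply/forall_inP => B.
move=> /rPQ /exists_inP[C /rQR /exists_inP[D DR CD] BC].
by apply/exists_inP; exists D; rewrite // (subset_trans BC CD).
Qed.

Lemma refines_top n (P : {set {set 'I_n}}) : refines P [set [set: 'I_n]].
Proof.
by apply/forall_inP => B _; apply/exists_inP; exists [set: 'I_n]; rewrite ?set11 ?subsetT.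
Qed.

Lemma refines_block n (P Q : {set {set 'I_n}}) B tau x :
  trivIset Q -> refines P Q -> B \in P -> tau \in Q -> x \in B -> x \in tau ->
  B \subset tau.
Proof.
move=> tiQ /forall_inP rPQ BP tauQ xB xtau; have /exists_inP[C CQ BC] := rPQ B BP.
by rewrite -(trivIset_block_eq tiQ CQ tauQ (subsetP BC x xB) xtau).
Qed.

Lemma partition_sub_block n (P Q : {set {set 'I_n}}) tau :
  partition P setT -> partition Q setT -> refines P Q -> tau \in Q ->
  partition (P ::&: tau) tau.
Proof.
move=> pP pQ rPQ tauQ; apply/and3P; split.
- apply/eqP/setP => x; apply/bigcupP/idP => [[B /[!inE] /andP[_ /subsetP]]|xtau].
    exact.
  have /bigcupP[B BP xB] : x \in cover P by rewrite (cover_partition pP) inE.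
  exists B; rewrite // inE BP.
  exact: refines_block (partition_trivIset pQ) rPQ BP tauQ xB xtau.
- exact/trivIsetI/partition_trivIset/pP.
- by rewrite inE (partition0 pP).
Qed.

Lemma refines_card1_eq n (P Q : {set {set 'I_n}}) :
  partition P setT -> partition Q setT -> refines P Q ->
  {in Q, forall tau, #|P ::&: tau| = 1%N} -> Q = P.
Proof.
move=> pP pQ rPQ one; apply: (partition_subset_eq pP pQ); apply/subsetP => tau tauQ.
have /eqP/cards1P[B eB] := one tau tauQ.
have := cover_partition (partition_sub_block pP pQ rPQ tauQ); rewrite eB cover1 => <-.
by have := set11 B; rewrite -eB inE => /andP[].
Qed.

Lemma NCpart_top n : (0 < n)%N -> NCpart [set [set: 'I_n]].
Proof.
move=> n_gt0; rewrite /NCpart /partition cover1 eqxx trivIset1 inE eq_sym /=.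
apply/andP; split; first by apply/set0Pn; exists (Ordinal n_gt0).
by apply/ncP => A B /set1P-> /set1P->; rewrite eqxx.
Qed.

Lemma partition_setT_block n (Q : {set {set 'I_n}}) :
  partition Q setT -> [set: 'I_n] \in Q -> Q = [set [set: 'I_n]].
Proof.
move=> pQ TQ; apply/setP => C; rewrite inE; apply/idP/eqP => [CQ|->] //.
have /set0Pn[x xC] := partition_neq0 pQ CQ.
exact: trivIset_block_eq (partition_trivIset pQ) CQ TQ xC (in_setT x).
Qed.

Lemma card_block_lt n (Q : {set {set 'I_n}}) tau :
  partition Q setT -> Q != [set [set: 'I_n]] -> tau \in Q -> (0 < #|tau| < n)%N.
Proof.
move=> pQ QT tauQ; rewrite card_gt0 (partition_neq0 pQ tauQ) /=.
have le_n : (#|tau| <= n)%N by rewrite -[X in (_ <= X)%N](card_ord n) max_card.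
rewrite ltn_neqAle le_n andbT; apply: contra QT => /eqP tau_n.
have tau_T : tau = [set: 'I_n].
  by apply/eqP; rewrite eqEcard subsetT cardsT card_ord tau_n leqnn.
by rewrite tau_T in tauQ; rewrite (partition_setT_block pQ tauQ).
Qed.

(** * Pulling back and pushing forward partitions *)

Definition pullpart m n (g : 'I_m -> 'I_n) (P : {set {set 'I_n}}) : {set {set 'I_m}} :=
  [set g @^-1: B | B : {set 'I_n} in P & B \subset g @: setT].

Definition pushpart m n (g : 'I_m -> 'I_n) (X : {set {set 'I_m}}) : {set {set 'I_n}} :=
  [set g @: B | B : {set 'I_m} in X].

Section PullPush.
Variables (m n : nat) (g : 'I_m -> 'I_n).
Hypothesis g_incr : {mono g : i j / (i < j)%N}.
Let g_inj := incr_inj g_incr.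
Local Notation img := (g @: [set: 'I_m]).

Lemma preimset_imset (B : {set 'I_m}) : g @^-1: (g @: B) = B.
Proof. by apply/setP => k; rewrite inE mem_imset. Qed.

Lemma imset_preimset (B : {set 'I_n}) : B \subset img -> g @: (g @^-1: B) = B.
Proof.
move=> /subsetP Bimg; apply/setP => x; apply/imsetP/idP => [[k + ->]|xB].
  by rewrite inE.
by have /imsetP[k _ ekx] := Bimg x xB; exists k; rewrite // inE -ekx.
Qed.

Lemma pullpartK X : pullpart g (pushpart g X) = X.
Proof.
apply/setP => Y; apply/imsetP/idP => [[C] /[!inE] /andP[/imsetP[B BX ->] _] ->|YX].
  by rewrite preimset_imset.
exists (g @: Y); last by rewrite preimset_imset.
by rewrite inE imset_f //= imsetS ?subsetT.
Qed.

Lemma pushpartK Y : pushpart g (pullpart g Y) = Y ::&: img.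
Proof.
apply/setP => B; apply/imsetP/idP => [[_ /imsetP[C] /[!inE] /andP[CY Cimg] -> ->]|].
  by rewrite imset_preimset // CY.
rewrite inE => /andP[BY Bimg]; exists (g @^-1: B); last by rewrite imset_preimset.
by apply/imsetP; exists B; rewrite // inE BY.
Qed.

Lemma partition_pushpart X : partition (pushpart g X) img = partition X setT.
Proof. exact: imset_partition. Qed.

Lemma partition_pullpart Y : partition (pullpart g Y) setT = partition (Y ::&: img) img.
Proof. by rewrite -partition_pushpart pushpartK. Qed.

Lemma noncrossing_pullpart Y : noncrossing Y -> noncrossing (pullpart g Y).
Proof.
move/ncP=> ncY; apply/ncP => _ _ /imsetP[A + ->] /imsetP[B + ->].
rewrite !inE => /andP[AY _] /andP[BY _] AB a b c d; rewrite !inE => aA bA cB dB.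
by rewrite -!g_incr; apply: (ncY A B) => //; apply: contraNneq AB => ->.
Qed.

Lemma noncrossing_pushpart X : noncrossing (pushpart g X) = noncrossing X.
Proof.
apply/idP/idP => [/noncrossing_pullpart|/ncP ncX]; first by rewrite pullpartK.
apply/ncP => _ _ /imsetP[A AX ->] /imsetP[B BX ->] AB.
move=> _ _ _ _ /imsetP[a aA ->] /imsetP[b bA ->] /imsetP[c cB ->] /imsetP[d dB ->].
by rewrite !g_incr; apply: (ncX A B) => //; apply: contraNneq AB => ->.
Qed.

Lemma refines_pushpart X Y : refines (pushpart g X) (pushpart g Y) = refines X Y.
Proof.
apply/forall_inP/forall_inP => [rXY B BX | rXY _ /imsetP[B BX ->]].
  have /exists_inP[_ /imsetP[C CY ->] BC] :=
    rXY _ (imset_f (fun C : {set 'I_m} => g @: C) BX).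
  apply/exists_inP; exists C => //.
  by rewrite -(preimset_imset B) -(preimset_imset C) preimsetS.
have /exists_inP[C CY BC] := rXY B BX.
by apply/exists_inP; exists (g @: C); rewrite ?imset_f ?imsetS.
Qed.

Lemma card_pullpart Y : #|pullpart g Y| = #|Y ::&: img|.
Proof. by rewrite -pushpartK [RHS]card_imset //; apply: imset_inj. Qed.

End PullPush.

Lemma pullpart_id n (P : {set {set 'I_n}}) : pullpart id P = P.
Proof.
apply/setP => B; apply/imsetP/idP => [[C /[!inE] /andP[CP _] ->] | BP].
  by rewrite (_ : id @^-1: C = C) //; apply/setP => x; rewrite inE.
by exists B; [rewrite inE BP imset_id subsetT | apply/setP => x; rewrite inE].
Qed.

Lemma pullpart_comp k m n (g1 : 'I_m -> 'I_n) (g2 : 'I_k -> 'I_m) P :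
  injective g1 -> pullpart g2 (pullpart g1 P) = pullpart (g1 \o g2) P.
Proof.
move=> g1_inj; apply/setP => Y; apply/imsetP/imsetP.
- case=> X /[!inE] /andP[/imsetP[B /[!inE] /andP[BP Bimg] ->] preB_img] ->.
  exists B; last by apply/setP => z; rewrite !inE.
  rewrite inE BP /=; apply/subsetP => x xB.
  have /imsetP[y _ exy] := subsetP Bimg x xB.
  have /imsetP[z _ eyz] : y \in g2 @: setT.
    by apply: (subsetP preB_img); rewrite inE -exy.
  by apply/imsetP; exists z; rewrite // exy eyz.
- case=> B /[!inE] /andP[BP Bimg] ->.
  exists (g1 @^-1: B); last by apply/setP => z; rewrite !inE.
  rewrite inE; apply/andP; split.
    apply/imsetP; exists B => //; rewrite inE BP /=.
    by apply: subset_trans Bimg _; rewrite imset_comp imsetS ?subsetT.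
  apply/subsetP => y; rewrite inE => /(subsetP Bimg) /imsetP[z _ e].
  by apply/imsetP; exists z; rewrite // (g1_inj _ _ e).
Qed.

(* The pulled-back partitions live on 'I_m1 and 'I_m2 with m1 = m2 only
   propositionally, so their equality is stated through an arbitrary c. *)
Lemma pullpart_incr_eq T (c : forall k, {set {set 'I_k}} -> T) m1 m2 n
    (g1 : 'I_m1 -> 'I_n) (g2 : 'I_m2 -> 'I_n) (P : {set {set 'I_n}}) :
  {mono g1 : i j / (i < j)%N} -> {mono g2 : i j / (i < j)%N} ->
  g1 @: setT = g2 @: setT -> c m1 (pullpart g1 P) = c m2 (pullpart g2 P).
Proof.
move=> g1_incr g2_incr eq_img; have eq_map := incr_map_enum_eq g1_incr g2_incr eq_img.
have em : m1 = m2.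
  by rewrite -(size_enum_ord m1) -(size_map g1) eq_map size_map size_enum_ord.
subst m2; have eq_g : g1 =1 g2.
  move=> i; rewrite -[i in g1 i](nth_ord_enum i i) -(nth_map i (g1 i)) ?size_enum_ord //.
  by rewrite eq_map (nth_map i) ?size_enum_ord // nth_ord_enum.
by rewrite /pullpart eq_img; congr (c m1 _); apply: eq_imset => B; exact: eq_preimset.
Qed.

Lemma restrictE n (P : {set {set 'I_n}}) tau :
  restrict P tau = pullpart (@enum_val _ (mem tau)) P.
Proof. by rewrite /pullpart enum_val_image. Qed.

Lemma restrict_setT T (c : forall k, {set {set 'I_k}} -> T) n (P : {set {set 'I_n}}) :
  c _ (restrict P [set: 'I_n]) = c n P.
Proof.
rewrite restrictE -[in RHS](pullpart_id P); apply: pullpart_incr_eq => //.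
  exact: enum_val_incr.
by rewrite enum_val_image imset_id.
Qed.

Lemma restrict_restrict T (c : forall k, {set {set 'I_k}} -> T) n (P : {set {set 'I_n}})
    (S : {set 'I_n}) (X : {set 'I_#|S|}) :
  c _ (restrict (restrict P S) X) = c _ (restrict P ((@enum_val _ (mem S)) @: X)).
Proof.
have S_incr := enum_val_incr (A := mem S).
rewrite !restrictE pullpart_comp; last exact: incr_inj S_incr.
apply: pullpart_incr_eq; last by rewrite imset_comp !enum_val_image.
  by move=> i j /=; rewrite S_incr enum_val_incr.
exact: enum_val_incr.
Qed.

Lemma restrict_ssetI n (Q : {set {set 'I_n}}) (rho : {set 'I_n}) :
  restrict (Q ::&: rho) rho = restrict Q rho.
Proof.
rewrite /restrict (_ : [set B in Q ::&: rho | B \subset rho] = Q ::&: rho) //.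
by apply/setP => B; rewrite !inE -andbA andbb.
Qed.

Lemma card_restrict n (P : {set {set 'I_n}}) tau : #|restrict P tau| = #|P ::&: tau|.
Proof. by rewrite restrictE card_pullpart ?enum_val_image //; exact: enum_val_incr. Qed.

Lemma NCpart_restrict n (P Q : {set {set 'I_n}}) tau :
  NCpart P -> partition Q setT -> refines P Q -> tau \in Q -> NCpart (restrict P tau).
Proof.
case/andP=> pP ncP pQ rPQ tauQ; have tau_incr := enum_val_incr (A := mem tau).
rewrite /NCpart restrictE partition_pullpart // enum_val_image.
by rewrite (partition_sub_block pP pQ rPQ tauQ) noncrossing_pullpart.
Qed.

Section BlockwisePartitions.
Variables (T : finType) (R : {set {set T}}) (D : {set T}) (f : {set T} -> {set {set T}}).
Hypotheses (pR : partition R D) (pf : {in R, forall rho, partition (f rho) rho}).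

Lemma partition_bigcup : partition (\bigcup_(rho in R) f rho) D.
Proof.
apply/and3P; split.
- apply/eqP/setP => x; rewrite -(cover_partition pR); apply/bigcupP/bigcupP.
    case=> A /bigcupP[rho rhoR Af] xA; exists rho => //.
    by rewrite -(cover_partition (pf rhoR)); apply/bigcupP; exists A.
  case=> rho rhoR; rewrite -(cover_partition (pf rhoR)) => /bigcupP[A Af xA].
  by exists A => //; apply/bigcupP; exists rho.
- apply/trivIsetP => A B /bigcupP[rA rAR Af] /bigcupP[rB rBR Bf] AB.
  have [eq_r | neq_r] := eqVneq rA rB.
    by move: Bf; rewrite -eq_r => Bf; apply: (trivIsetP (partition_trivIset (pf rAR))).
  apply: disjointWl (partitionS (pf rAR) Af) _.
  apply: disjointWr (partitionS (pf rBR) Bf) _.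
  exact: (trivIsetP (partition_trivIset pR)).
- by apply/bigcupP => -[rho rhoR]; rewrite (partition0 (pf rhoR)).
Qed.

Lemma bigcup_ssetI_block rho : rho \in R -> (\bigcup_(rho' in R) f rho') ::&: rho = f rho.
Proof.
move=> rhoR; apply/setP => A; rewrite inE.
apply/andP/idP => [[/bigcupP[rho' rho'R Af] Arho]|Af].
  have /set0Pn[x xA] := partition_neq0 (pf rho'R) Af.
  have xrho' := subsetP (partitionS (pf rho'R) Af) x xA.
  by rewrite (trivIset_block_eq (partition_trivIset pR) rhoR rho'R (subsetP Arho x xA) xrho').
by split; [apply/bigcupP; exists rho | exact: partitionS (pf rhoR) Af].
Qed.

End BlockwisePartitions.

Lemma noncrossing_bigcup n (R : {set {set 'I_n}}) (f : {set 'I_n} -> {set {set 'I_n}}) :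
  noncrossing R -> {in R, forall rho, partition (f rho) rho} ->
  {in R, forall rho, noncrossing (f rho)} -> noncrossing (\bigcup_(rho in R) f rho).
Proof.
move=> /ncP ncR pf ncf; apply/ncP => A B /bigcupP[rA rAR Af] /bigcupP[rB rBR Bf] AB.
have [eq_r | neq_r] := eqVneq rA rB.
  by move: Bf; rewrite -eq_r => Bf; move/ncP: (ncf rA rAR); apply.
move=> a b c d aA bA cB dB.
have [sA sB] := (subsetP (partitionS (pf rA rAR) Af), subsetP (partitionS (pf rB rBR) Bf)).
exact: ncR (sA a aA) (sA b bA) (sB c cB) (sB d dB).
Qed.

Lemma bigcup_ssetI n (Q R : {set {set 'I_n}}) :
  refines Q R -> \bigcup_(rho in R) (Q ::&: rho) = Q.
Proof.
move=> rQR; apply/setP => tau; apply/bigcupP/idP => [[rho _] /[!inE] /andP[] //|tauQ].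
have /exists_inP[rho rhoR tau_rho] := forall_inP rQR tau tauQ.
by exists rho; rewrite // inE tauQ.
Qed.

Lemma big_ssetI_blocks (V : Type) (idx : V) (op : Monoid.com_law idx) n
    (Q R : {set {set 'I_n}}) (F : {set 'I_n} -> V) :
  partition Q setT -> partition R setT -> refines Q R ->
  \big[op/idx]_(rho in R) \big[op/idx]_(tau in Q ::&: rho) F tau =
  \big[op/idx]_(tau in Q) F tau.
Proof.
move=> pQ pR rQR; symmetry.
rewrite (eq_bigr (fun tau : {set 'I_n} =>
    \big[op/idx]_(rho | (rho \in R) && (tau \subset rho)) F tau)); last first.
  move=> tau tauQ; have /exists_inP[rho0 rho0R tau_rho0] := forall_inP rQR tau tauQ.
  rewrite (big_pred1 rho0) // => rho /=; apply/andP/eqP => [[rhoR tau_rho]|->] //.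
  have /set0Pn[x xtau] := partition_neq0 pQ tauQ.
  exact: (trivIset_block_eq (partition_trivIset pR) rhoR rho0R
            (subsetP tau_rho x xtau) (subsetP tau_rho0 x xtau)).
rewrite (exchange_big_dep (mem R)) /=; last by move=> ? ? _ /andP[].
by apply: eq_bigr => rho rhoR; apply: eq_bigl => tau; rewrite inE rhoR.
Qed.

(* For S a block of R these are exactly the traces on S of the noncrossing Q
   with P <= Q <= R. *)
Definition nc_coarsening n (P : {set {set 'I_n}}) (S : {set 'I_n}) (X : {set {set 'I_n}}) :=
  [&& partition X S, noncrossing X & refines (P ::&: S) X].

Lemma nc_coarsening_pushpart m n (g : 'I_m -> 'I_n) (P : {set {set 'I_n}}) X :
  {mono g : i j / (i < j)%N} ->
  nc_coarsening P (g @: setT) (pushpart g X) = NCpart X && refines (pullpart g P) X.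
Proof.
move=> g_incr; rewrite /nc_coarsening -(pushpartK g P) refines_pushpart //.
by rewrite partition_pushpart // noncrossing_pushpart // andbA.
Qed.

Lemma coarsening_bigcup n (P R : {set {set 'I_n}}) (f : {set 'I_n} -> {set {set 'I_n}}) :
  NCpart R -> refines P R -> {in R, forall rho, nc_coarsening P rho (f rho)} ->
  [&& NCpart (\bigcup_(rho in R) f rho), refines P (\bigcup_(rho in R) f rho)
    & refines (\bigcup_(rho in R) f rho) R].
Proof.
move=> /andP[pR ncR] rPR cf.
have pf : {in R, forall rho, partition (f rho) rho} by move=> rho /cf /and3P[].
apply/and3P; split.
- by rewrite /NCpart partition_bigcup // noncrossing_bigcup // => rho /cf /and3P[].
- apply/forall_inP => B BP; have /exists_inP[rho rhoR Brho] := forall_inP rPR B BP.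
  have /and3P[_ _ /forall_inP rf] := cf rho rhoR.
  have /exists_inP[C Cf BC] : [exists C in f rho, B \subset C].
    by apply: rf; rewrite inE BP Brho.
  by apply/exists_inP; exists C => //; apply/bigcupP; exists rho.
- apply/forall_inP => A /bigcupP[rho rhoR Af].
  by apply/exists_inP; exists rho; rewrite // (partitionS (pf rho rhoR) Af).
Qed.

Lemma coarsening_ssetI n (P Q R : {set {set 'I_n}}) rho :
  partition P setT -> NCpart Q -> refines P Q -> partition R setT -> refines Q R ->
  rho \in R -> nc_coarsening P rho (Q ::&: rho).
Proof.
move=> pP /andP[pQ ncQ] rPQ pR rQR rhoR; apply/and3P; split.
- exact: partition_sub_block pQ pR rQR rhoR.
- by apply: noncrossingS ncQ; apply/subsetP => A /[!inE] /andP[].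
- apply/forall_inP => B /[!inE] /andP[BP Brho].
  have /exists_inP[C CQ BC] := forall_inP rPQ B BP.
  have /set0Pn[x xB] := partition_neq0 pP BP.
  apply/exists_inP; exists C => //; rewrite inE CQ.
  exact: refines_block (partition_trivIset pR) rQR CQ rhoR (subsetP BC x xB) (subsetP Brho x xB).
Qed.

(** * Coassociativity *)

Local Open Scope ring_scope.

Lemma convB_restrict (K : fieldType) (b c : charB K) n (P : {set {set 'I_n}}) (S : {set 'I_n}) :
  convB b c (restrict P S) =
  \sum_(X | nc_coarsening P S X)
     b #|S| (restrict X S) * \prod_(tau in X) c #|tau| (restrict P tau).
Proof.
set g := @enum_val _ (mem S).
have g_incr : {mono g : i j / (i < j)%N} := enum_val_incr (A := mem S).
have g_inj := incr_inj g_incr; have img_g : g @: setT = S := enum_val_image S.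
rewrite /convB (reindex_onto (fun X : {set {set 'I_n}} => restrict X S) (pushpart g)) /=.
  apply: eq_big => [X | X].
    rewrite !restrictE -[in RHS]img_g -nc_coarsening_pushpart // pushpartK //.
    case: eqVneq => [-> | neqX]; first by rewrite andbT.
    rewrite andbF; apply/esym/negbTE/negP => /and3P[/partition_ssetI eqX _ _].
    by rewrite eqX eqxx in neqX.
  move=> /andP[_ /eqP eqX]; congr (_ * _).
  rewrite -[in RHS]eqX [in RHS]big_imset /=; last by move=> A B _ _; exact: imset_inj.
  by apply: eq_bigr => tau _; rewrite (restrict_restrict c).
by move=> X _; rewrite restrictE pullpartK.
Qed.

Definition blocks_in n (R Q : {set {set 'I_n}}) : {ffun {set 'I_n} -> {set {set 'I_n}}} :=
  [ffun rho => if rho \in R then Q ::&: rho else set0].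

Lemma prod_sum_coarsenings (K : fieldType) n (P R : {set {set 'I_n}})
    (F : {set 'I_n} -> {set {set 'I_n}} -> K) :
  partition P setT -> NCpart R -> refines P R ->
  \prod_(rho in R) \sum_(X | nc_coarsening P rho X) F rho X =
  \sum_(Q | [&& NCpart Q, refines P Q & refines Q R]) \prod_(rho in R) F rho (Q ::&: rho).
Proof.
move=> pP ncR rPR; have pR : partition R setT by case/andP: ncR.
rewrite (big_distr_big_dep set0) /=.
rewrite (reindex_onto (blocks_in R) (fun f => \bigcup_(rho in R) f rho)) /=; last first.
  move=> f /pfamilyP[supp cf]; apply/ffunP => rho; rewrite ffunE; case: ifP => rhoR.
    by apply: (bigcup_ssetI_block pR) rhoR => rho' /cf /and3P[].
  apply/eqP; rewrite eq_sym; apply: contraFT rhoR => nz.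
  by apply: (subsetP supp); rewrite inE.
apply: eq_big => [Q|Q _]; last by apply: eq_bigr => rho rhoR; rewrite ffunE rhoR.
apply/andP/and3P => [[/pfamilyP[_ cf] /eqP <-] | [ncQ rPQ rQR]].
  by apply/and3P; apply: coarsening_bigcup.
split.
  apply/pfamilyP; split => [|rho rhoR].
    by apply/subsetP => rho; rewrite inE ffunE; case: ifP; rewrite ?eqxx.
  by rewrite ffunE rhoR; exact: (coarsening_ssetI pP ncQ rPQ pR rQR rhoR).
apply/eqP; rewrite -[RHS](bigcup_ssetI rQR).
by apply: eq_bigr => rho rhoR; rewrite ffunE rhoR.
Qed.

Lemma convBA (K : fieldType) (a b c : charB K) n (P : {set {set 'I_n}}) :
  partition P setT -> convB (convB a b) c P = convB a (convB b c) P.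
Proof.
move=> pP; transitivity (\sum_(R | NCpart R && refines P R)
    \sum_(Q | [&& NCpart Q, refines P Q & refines Q R])
      a n R * ((\prod_(rho in R) b #|rho| (restrict Q rho)) *
               \prod_(tau in Q) c #|tau| (restrict P tau))).
  rewrite /convB; under eq_bigr do rewrite big_distrl.
  rewrite (exchange_big_dep (fun R => NCpart R && refines P R)) /=; last first.
    by move=> Q R /andP[_ rPQ] /andP[-> rQR]; rewrite (refines_trans rPQ rQR).
  apply: eq_bigr => R /andP[ncR _]; apply: eq_big => [Q|Q _]; last by rewrite mulrA.
  by rewrite ncR -andbA.
rewrite {1}/convB; apply: eq_bigr => R /andP[ncR rPR]; rewrite -mulr_sumr; congr (_ * _).
under eq_bigr do rewrite convB_restrict.
rewrite prod_sum_coarsenings //; apply: eq_bigr => Q /and3P[/andP[pQ _] _ rQR].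
rewrite big_split /=; congr (_ * _); last by rewrite big_ssetI_blocks //; case/andP: ncR.
by apply: eq_bigr => rho _; rewrite restrict_ssetI.
Qed.

(** * Unit and inverses *)

Lemma prod_epsB_restrict (K : fieldType) n (P Q : {set {set 'I_n}}) :
  partition P setT -> partition Q setT -> refines P Q ->
  \prod_(tau in Q) @epsB K #|tau| (restrict P tau) = (Q == P)%:R.
Proof.
move=> pP pQ rPQ; have [-> | QP] := eqVneq Q P.
  by apply: big1 => tau tauP; rewrite /epsB card_restrict (ssetI_block pP tauP) cards1.
apply/eqP/prodf_eq0.
have [tau /andP[tauQ ne1] | all1] := pickP [pred tau in Q | #|P ::&: tau| != 1%N].
  by exists tau => //; rewrite /epsB card_restrict (negbTE ne1).
case/eqP: QP; apply: refines_card1_eq => // tau tauQ; apply/eqP.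
by have := all1 tau; rewrite /= tauQ => /negbFE.
Qed.

Lemma convB_split (K : fieldType) (phi X : charB K) n (P : {set {set 'I_n}}) :
  (0 < n)%N ->
  convB phi X P = phi n [set [set: 'I_n]] * X n P +
    \sum_(Q | NCpart Q && refines P Q && (Q != [set [set: 'I_n]]))
       phi n Q * \prod_(tau in Q) X #|tau| (restrict P tau).
Proof.
move=> n_gt0; rewrite /convB (bigD1 [set [set: 'I_n]]) /= ?NCpart_top ?refines_top //.
by rewrite big_set1 (restrict_setT X).
Qed.

Lemma convB_top (K : fieldType) (phi psi : charB K) n : (0 < n)%N ->
  convB phi psi [set [set: 'I_n]] = phi n [set [set: 'I_n]] * psi n [set [set: 'I_n]].
Proof.
move=> n_gt0; rewrite convB_split // big_pred0 ?addr0 // => Q.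
case: (boolP (refines _ Q)) => [/forall_inP rTQ | _]; last by rewrite andbF.
case: (boolP (NCpart Q)) => [/andP[pQ _] | //]; apply/negbTE; rewrite negbK.
have /exists_inP[C CQ TC] := rTQ _ (set11 [set: 'I_n]).
have C_T : C = [set: 'I_n] by apply/eqP; rewrite eqEsubset subsetT.
by rewrite C_T in CQ; rewrite (partition_setT_block pQ CQ).
Qed.

Lemma convB_epsl (K : fieldType) (X : charB K) n (P : {set {set 'I_n}}) :
  (0 < n)%N -> convB (@epsB K) X P = X n P.
Proof.
move=> n_gt0; rewrite convB_split // /epsB cards1 eqxx mul1r big1 ?addr0 //.
move=> Q /andP[/andP[/andP[pQ _] _] QT].
case: ifP => [/cards1P[C eQ] | _]; last by rewrite mul0r.
have C_T : C = [set: 'I_n] by rewrite -(cover_partition pQ) eQ cover1.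
by rewrite eQ C_T eqxx in QT.
Qed.

Lemma convB_epsr (K : fieldType) (X : charB K) n (P : {set {set 'I_n}}) :
  NCpart P -> convB X (@epsB K) P = X n P.
Proof.
move=> ncP; have pP : partition P setT by case/andP: ncP.
rewrite /convB (bigD1 P) /=; last by rewrite ncP refines_refl.
rewrite prod_epsB_restrict ?refines_refl // eqxx mulr1 big1 ?addr0 //.
move=> Q /andP[/andP[/andP[pQ _] rPQ] QP].
by rewrite prod_epsB_restrict // (negbTE QP) mulr0.
Qed.

Lemma eqB_convBl (K : fieldType) (X X' Y : charB K) :
  eqB X X' -> eqB (convB X Y) (convB X' Y).
Proof. by move=> eqX n P n_gt0 _; apply: eq_bigr => Q /andP[ncQ _]; rewrite eqX. Qed.

Lemma convB_inj (K : fieldType) (phi X Y : charB K) :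
  (forall n, (0 < n)%N -> phi n [set [set: 'I_n]] != 0) ->
  eqB (convB phi X) (convB phi Y) -> eqB X Y.
Proof.
move=> phi_top eqXY n; elim/ltn_ind: n => n IHn P n_gt0 ncP.
have := eqXY n P n_gt0 ncP; rewrite !convB_split //.
rewrite (eq_bigr (fun Q => phi n Q * \prod_(tau in Q) Y #|tau| (restrict P tau))).
  by move/addIr/(mulfI (phi_top n n_gt0)).
move=> Q /andP[/andP[/andP[pQ _] rPQ] QT]; congr (_ * _); apply: eq_bigr => tau tauQ.
have /andP[tau_gt0 tau_lt] := card_block_lt pQ QT tauQ.
exact: IHn tau_lt _ tau_gt0 (NCpart_restrict ncP pQ rPQ tauQ).
Qed.

(* Recursion with fuel: the blocks of a coarsening Q <> I_n have fewer than n
   points, so on partitions of [n] any fuel larger than n gives the same value. *)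
Fixpoint rinv_fuel (K : fieldType) (phi : charB K) (fuel : nat) : charB K :=
  if fuel is fuel'.+1 then fun n P =>
    (@epsB K n P - \sum_(Q | NCpart Q && refines P Q && (Q != [set [set: 'I_n]]))
        phi n Q * \prod_(tau in Q) rinv_fuel phi fuel' (restrict P tau))
      / phi n [set [set: 'I_n]]
  else fun _ _ => 0.

Definition rinvB (K : fieldType) (phi : charB K) : charB K :=
  fun n P => rinv_fuel phi n.+1 P.

Lemma rinv_fuel_eq (K : fieldType) (phi : charB K) f f' n (P : {set {set 'I_n}}) :
  (n < f)%N -> (n < f')%N -> rinv_fuel phi f P = rinv_fuel phi f' P.
Proof.
elim: f f' n P => [|f IHf] [|f'] n P //= n_lt n_lt'.
congr ((_ - _) / _); apply: eq_bigr => Q /andP[/andP[/andP[pQ _] _] QT]; congr (_ * _).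
apply: eq_bigr => tau tauQ; have /andP[_ tau_lt] := card_block_lt pQ QT tauQ.
by apply: IHf; apply: leq_trans tau_lt _.
Qed.

Lemma rinvBE (K : fieldType) (phi : charB K) n (P : {set {set 'I_n}}) :
  rinvB phi P =
  (@epsB K n P - \sum_(Q | NCpart Q && refines P Q && (Q != [set [set: 'I_n]]))
      phi n Q * \prod_(tau in Q) rinvB phi (restrict P tau)) / phi n [set [set: 'I_n]].
Proof.
rewrite {1}/rinvB [LHS]/=; congr ((_ - _) / _).
apply: eq_bigr => Q /andP[/andP[/andP[pQ _] _] QT]; congr (_ * _).
apply: eq_bigr => tau tauQ; have /andP[_ tau_lt] := card_block_lt pQ QT tauQ.
exact: rinv_fuel_eq.
Qed.

Lemma convB_rinvB (K : fieldType) (phi : charB K) :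
  (forall n, (0 < n)%N -> phi n [set [set: 'I_n]] != 0) ->
  eqB (convB phi (rinvB phi)) (@epsB K).
Proof.
by move=> phi_top n P n_gt0 _; rewrite convB_split // rinvBE mulrC divfK ?phi_top // subrK.
Qed.

Theorem mainTheorem9 (K : fieldType) (charK0 : [pchar K] =i pred0) (phi : charB K) :
  invertibleB phi <-> (forall n : nat, (0 < n)%N -> phi n [set [set: 'I_n]] != 0).
Proof.
split=> [[psi [phi_psi _]] n n_gt0 | phi_top].
  have := phi_psi n _ n_gt0 (NCpart_top n_gt0).
  rewrite convB_top // /epsB cards1 eqxx => phi_psi_top.
  by have := oner_neq0 K; rewrite -phi_psi_top mulf_eq0 negb_or => /andP[].
exists (rinvB phi); split; first exact: convB_rinvB.
apply: (convB_inj phi_top) => n P n_gt0 ncP; have pP : partition P setT by case/andP: ncP.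
by rewrite -convBA // (eqB_convBl _ (convB_rinvB phi_top)) // convB_epsl // convB_epsr.
Qed.
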